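(* Let $m\in\mathbb{N}$ and let $X=\{a_1,\dots,a_n\}\subset\mathbb{R}^m$ be a finite point cloud with at least two points, equipped with the Euclidean metric $d_X$. Let $\rho_{\mathrm{UTD}}:X\to\mathcal{S}(\mathbb{C}^{m+1})$ be the uniformly transformed diagonal encoding $\rho_{\mathrm{UTD}}(x)=\sum_{j=1}^{m+1}\mathcal{T}_X(x)_j\,|j\rangle\langle j|$. Then for all $x,y\in X$, $$d_{\mathrm{HS}}\big(\rho_{\mathrm{UTD}}(x),\rho_{\mathrm{UTD}}(y)\big)=\frac{d_X(x,y)}{r(X)\sqrt{m(m+1)}}.$$
   Context: Let $\bar a=\frac1n\sum_{i=1}^n a_i$ be the mean of $X$, $\mathrm{diam}(X)=\max_{i,j}\lVert a_i-a_j\rVert$, and $r(X)=\mathrm{diam}(X)/2$. Let $R_m$ be the $(m+1)\times(m+1)$ orthogonal matrix with entries: for $i,j\in\{1,\dots,m\}$, $(R_m)_{ii}=\frac{1+(m-1)\sqrt{m+1}}{m\sqrt{m+1}}$ and $(R_m)_{ij}=\frac{1-\sqrt{m+1}}{m\sqrt{m+1}}$ for $i\ne j$; $(R_m)_{m+1,j}=-\frac{1}{\sqrt{m+1}}$ for $j\in\{1,\dots,m\}$; and $(R_m)_{i,m+1}=\frac{1}{\sqrt{m+1}}$ for all $i\in\{1,\dots,m+1\}$. The uniform transformation $\mathcal{T}_X:\mathbb{R}^m\to\mathbb{R}^{m+1}$ associated with $X$ is $$\mathcal{T}_X(x)=\frac{1}{r(X)\sqrt{m(m+1)}}\,R_m\begin{bmatrix}x-\bar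 a\\0\end{bmatrix}+\frac{1}{m+1}\mathbf{1}_{m+1},$$ where $\mathbf{1}_{m+1}$ is the all-ones vector (this maps $X$ into the probability simplex $\Delta^m=\{p\in\mathbb{R}^{m+1}:p_j\ge0,\ \sum_j p_j=1\}$). $|1\rangle,\dots,|m+1\rangle$ is the standard basis of $\mathbb{C}^{m+1}$, $\mathcal{S}(\mathbb{C}^{m+1})$ the set of density matrices, and $d_{\mathrm{HS}}(\rho,\sigma)=\sqrt{\mathrm{Tr}[(\rho-\sigma)^\dagger(\rho-\sigma)]}$ is the Hilbert--Schmidt distance. *)

From HB Require Import structures.
From mathcomp Require Import all_boot all_order all_algebra.
From mathcomp Require Import complex.
Set Implicit Arguments. Unset Strict Implicit. Unset Printing Implicit Defensive.
Import Order.TTheory GRing.Theory Num.Theory.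
Local Open Scope ring_scope.

Definition enorm (R : rcfType) (m : nat) (v : 'rV[R]_m) : R :=
  Num.sqrt (\sum_(k < m) v 0 k ^+ 2).
Definition edist (R : rcfType) (m : nat) (x y : 'rV[R]_m) : R := enorm (x - y).

(* Point cloud X = {a_0, ..., a_{n-1}} given by an indexing a : 'I_n -> R^m. *)
Definition pc_mean (R : rcfType) (m n : nat) (a : 'I_n -> 'rV[R]_m) : 'rV[R]_m :=
  (n%:R)^-1 *: \sum_(i < n) a i.
Definition pc_diam (R : rcfType) (m n : nat) (a : 'I_n -> 'rV[R]_m) : R :=
  \big[Num.max/0]_(i < n) \big[Num.max/0]_(j < n) edist (a i) (a j).
Definition pc_r (R : rcfType) (m n : nat) (a : 'I_n -> 'rV[R]_m) : R :=
  pc_diam a / 2.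

(* The (m+1)x(m+1) matrix R_m; index ord_max is the (m+1)-th row/column. *)
Definition Rmat (R : rcfType) (m : nat) : 'M[R]_(m.+1) :=
  \matrix_(i < m.+1, j < m.+1)
    if j == ord_max then (Num.sqrt (m.+1)%:R)^-1
    else if i == ord_max then - (Num.sqrt (m.+1)%:R)^-1
    else if i == j then (1 + (m%:R - 1) * Num.sqrt (m.+1)%:R)
                        / (m%:R * Num.sqrt (m.+1)%:R)
    else (1 - Num.sqrt (m.+1)%:R) / (m%:R * Num.sqrt (m.+1)%:R).

Definition ext0 (R : rcfType) (m : nat) (v : 'rV[R]_m) : 'cV[R]_(m.+1) :=
  \col_(i < m.+1) (if unlift ord_max i is Some k then v 0 k else 0).

Definition unifT (R : rcfType) (m n : nat) (a : 'I_n -> 'rV[R]_m)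
  (x : 'rV[R]_m) : 'cV[R]_(m.+1) :=
  (pc_r a * Num.sqrt (m * m.+1)%:R)^-1 *: (Rmat R m *m ext0 (x - pc_mean a))
  + ((m.+1)%:R)^-1 *: const_mx 1.

Definition rhoUTD (R : rcfType) (m n : nat) (a : 'I_n -> 'rV[R]_m)
  (x : 'rV[R]_m) : 'M[R[i]]_(m.+1) :=
  \sum_(j < m.+1) ((unifT a x j 0)%:C)%C *: delta_mx j j.

Definition adjmx (C : numClosedFieldType) (k : nat) (A : 'M[C]_k) : 'M[C]_k :=
  map_mx Num.conj A^T.
Definition dHS (C : numClosedFieldType) (k : nat) (A B : 'M[C]_k) : C :=
  sqrtC (\tr (adjmx (A - B) *m (A - B))).

From HB Require Import structures.
From mathcomp Require Import all_boot all_order all_algebra.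
From mathcomp Require Import complex.
From mathcomp Require Import ring.
Import Order.TTheory GRing.Theory Num.Theory.
Local Open Scope ring_scope.

(* The encodings of x and y differ by the real diagonal matrix with diagonal
   T_X(x) - T_X(y), whose Hilbert-Schmidt norm is the Euclidean norm of that
   diagonal.  Up to a translation, T_X is v |-> c R_m [v; 0] with
   c = 1/(r(X) sqrt(m(m+1))), and R_m is orthogonal, so T_X multiplies every
   distance by c. *)

Section DiagonalEncoding.
Variable R : rcfType.

Lemma sqrtC_real (x : R) : 0 <= x -> sqrtC ((x%:C)%C) = ((Num.sqrt x)%:C)%C.
Proof.
move=> x_ge0; rewrite -{1}(sqr_sqrtr x_ge0) rmorphXn sqrCK //.
by rewrite ler0c sqrtr_ge0.
Qed.

Variable k : nat.

Lemma adjmx_diag_real (w : 'rV[R]_k) :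
  adjmx (diag_mx (\row_j ((w 0 j)%:C)%C)) = diag_mx (\row_j ((w 0 j)%:C)%C).
Proof.
apply/matrixP => i j; rewrite !mxE eq_sym.
by case: eqP => [->|_]; rewrite ?mulr0n ?mulr1n ?rmorph0 // conj_Creal ?complex_real.
Qed.

Lemma dHS_diag (p q : 'cV[R]_k) :
  dHS (\sum_j ((p j 0)%:C)%C *: delta_mx j j)
      (\sum_j ((q j 0)%:C)%C *: delta_mx j j) =
  ((Num.sqrt (\sum_j (p j 0 - q j 0) ^+ 2))%:C)%C.
Proof.
rewrite /dHS; set w : 'rV[R]_k := \row_j (p j 0 - q j 0).
have -> : \sum_j ((p j 0)%:C)%C *: delta_mx j j
          - \sum_j ((q j 0)%:C)%C *: delta_mx j j
          = diag_mx (\row_j ((w 0 j)%:C)%C).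
  rewrite diag_mx_sum_delta -sumrB; apply: eq_bigr => j _.
  by rewrite !mxE -scalerBl rmorphB.
rewrite adjmx_diag_real mulmx_diag mxtrace_diag.
rewrite -sqrtC_real ?sumr_ge0 // => [|j _]; last exact: sqr_ge0.
by congr sqrtC; rewrite rmorph_sum; apply: eq_bigr => j _; rewrite !mxE rmorphXn.
Qed.

End DiagonalEncoding.

Section RmatIsometry.
Variables (R : rcfType) (m : nat).

Local Notation s := (Num.sqrt (m.+1)%:R : R).
Local Notation alpha := ((1 - s) / (m%:R * s)).

Lemma sqrt_succ_neq0 : s != 0.
Proof. by rewrite sqrtr_eq0 -ltNge ltr0n. Qed.

Lemma lift_max_eqF (k : 'I_m) : (lift ord_max k == ord_max) = false.
Proof. by rewrite eq_sym (negbTE (neq_lift _ _)). Qed.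

Lemma ext0_lift (v : 'rV[R]_m) k : ext0 v (lift ord_max k) 0 = v 0 k.
Proof. by rewrite mxE liftK. Qed.

Lemma ext0_max (v : 'rV[R]_m) : ext0 v ord_max 0 = 0.
Proof. by rewrite mxE unlift_none. Qed.

Lemma ext0B (u v : 'rV[R]_m) : ext0 (u - v) = ext0 u - ext0 v.
Proof.
by apply/colP => i; rewrite !mxE; case: unlift => [k|]; rewrite ?mxE ?subr0.
Qed.

Lemma mulmx_ext0 p (A : 'M[R]_(p, m.+1)) (v : 'rV[R]_m) l :
  (A *m ext0 v) l 0 = \sum_k A l (lift ord_max k) * v 0 k.
Proof.
rewrite mxE (bigD1_ord ord_max) //= ext0_max mulr0 add0r.
by apply: eq_bigr => k _; rewrite ext0_lift.
Qed.

Lemma Rmat_lift_lift i k :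
  Rmat R m (lift ord_max i) (lift ord_max k) = (i == k)%:R + alpha.
Proof.
have m_neq0 : m%:R != 0 :> R by rewrite pnatr_eq0 -lt0n (leq_ltn_trans _ (ltn_ord i)).
rewrite !mxE !lift_max_eqF (inj_eq lift_inj).
case: eqP => _ /=; last by rewrite add0r.
by field; rewrite sqrt_succ_neq0 m_neq0.
Qed.

Lemma Rmat_max_lift k : Rmat R m ord_max (lift ord_max k) = - s^-1.
Proof. by rewrite !mxE lift_max_eqF eqxx. Qed.

Lemma Rmat_ext0_lift (v : 'rV[R]_m) i :
  (Rmat R m *m ext0 v) (lift ord_max i) 0 = v 0 i + alpha * \sum_k v 0 k.
Proof.
rewrite mulmx_ext0 mulr_sumr.
under eq_bigr => k _ do rewrite Rmat_lift_lift mulrDl.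
rewrite big_split /= (bigD1 i) //= eqxx mul1r big1 ?addr0 // => k ne_ki.
by rewrite eq_sym (negbTE ne_ki) mul0r.
Qed.

Lemma Rmat_ext0_max (v : 'rV[R]_m) :
  (Rmat R m *m ext0 v) ord_max 0 = - (s^-1 * \sum_k v 0 k).
Proof.
rewrite mulmx_ext0 mulr_sumr -sumrN; apply: eq_bigr => k _.
by rewrite Rmat_max_lift mulNr.
Qed.

(* [alpha] is the root of [m X^2 + 2 X + 1/(m+1)] that makes the first [m]
   columns of [R_m] unit vectors. *)
Lemma Rmat_alpha_root : (0 < m)%N ->
  m%:R * alpha ^+ 2 + 2 * alpha + s^-1 ^+ 2 = 0.
Proof.
move=> m_gt0; have m_neq0 : m%:R != 0 :> R by rewrite pnatr_eq0 -lt0n.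
have -> : m%:R * alpha ^+ 2 + 2 * alpha + s^-1 ^+ 2
          = ((m.+1)%:R - s ^+ 2) / (m%:R * s ^+ 2).
  by field; rewrite sqrt_succ_neq0 m_neq0.
by rewrite sqr_sqrtr ?ler0n // subrr mul0r.
Qed.

Lemma Rmat_ext0_norm (v : 'rV[R]_m) :
  \sum_l (Rmat R m *m ext0 v) l 0 ^+ 2 = \sum_k v 0 k ^+ 2.
Proof.
set S := \sum_k v 0 k.
rewrite (bigD1_ord ord_max) //= Rmat_ext0_max.
under eq_bigr => i _ do rewrite Rmat_ext0_lift -/S.
transitivity (\sum_k v 0 k ^+ 2
              + S ^+ 2 * (m%:R * alpha ^+ 2 + 2 * alpha + s^-1 ^+ 2)).
  have -> : \sum_i (v 0 i + alpha * S) ^+ 2 =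
            \sum_i (v 0 i ^+ 2 + 2 * alpha * S * v 0 i + (alpha * S) ^+ 2).
    by apply: eq_bigr => i _; ring.
  by rewrite !big_split /= -!mulr_sumr -/S sumr_const card_ord; ring.
have [/Rmat_alpha_root->|m_le0] := ltnP 0 m; first by rewrite mulr0 addr0.
have S0 : S = 0 by rewrite /S big1 // => k; have := leq_trans (ltn_ord k) m_le0.
by rewrite S0 expr0n mul0r addr0.
Qed.

End RmatIsometry.

Section UniformTransformation.
Variables (R : rcfType) (m n : nat) (a : 'I_n -> 'rV[R]_m).

Local Notation scale := (pc_r a * Num.sqrt (m * m.+1)%:R).

Lemma pc_r_ge0 : 0 <= pc_r a.
Proof.
rewrite divr_ge0 //; apply: (big_ind (>= 0)) => [//|x y x_ge0 _|i _].
  by rewrite le_max x_ge0.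
apply: (big_ind (>= 0)) => [//|x y x_ge0 _|j _]; first by rewrite le_max x_ge0.
exact: sqrtr_ge0.
Qed.

Lemma unifTB x y :
  unifT a x - unifT a y = scale^-1 *: (Rmat R m *m ext0 (x - y)).
Proof.
rewrite /unifT opprD addrACA subrr addr0 -scalerBr -mulmxBr -ext0B.
by rewrite opprB addrA subrK.
Qed.

Lemma unifT_dist x y :
  Num.sqrt (\sum_j (unifT a x j 0 - unifT a y j 0) ^+ 2) = edist x y / scale.
Proof.
have scale_ge0 : 0 <= scale^-1 by rewrite invr_ge0 mulr_ge0 ?sqrtr_ge0 ?pc_r_ge0.
have entry l : unifT a x l 0 - unifT a y l 0 =
                scale^-1 * (Rmat R m *m ext0 (x - y)) l 0.
  by have /matrixP/(_ l 0) := unifTB x y; rewrite !mxE.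
under eq_bigr => l _ do rewrite entry exprMn.
rewrite -mulr_sumr Rmat_ext0_norm sqrtrM ?sqr_ge0 // sqrtr_sqr ger0_norm //.
by rewrite mulrC.
Qed.

End UniformTransformation.

Theorem mainTheorem2 (R : rcfType) (m n : nat) (a : 'I_n -> 'rV[R]_m)
  (a_inj : injective a) (n_ge2 : (1 < n)%N) (i j : 'I_n) :
  dHS (rhoUTD a (a i)) (rhoUTD a (a j)) =
  ((edist (a i) (a j) / (pc_r a * Num.sqrt (m * m.+1)%:R))%:C)%C.
Proof. by rewrite /rhoUTD dHS_diag unifT_dist. Qed.
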